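(* Let $k\ge1$, let $a\le b$ be integers, and let $W=(w_1,\dots,w_k)$, $W'=(w'_1,\dots,w'_k)\in(\mathbb C\setminus\{0,-1\})^k$ with $w_i\ne w'_{i'}$ for all $i,i'$. Define $$\hat S_{a,b}(W,W')=\sum_{a\le x_1\le\cdots\le x_k\le b}\det\big[(w_i+1)^{x_j}w_i^j\big]_{i,j=1}^k\det\big[(w'_i+1)^{-x_j}(w'_i)^{-j}\big]_{i,j=1}^k,$$ the sum over integers $x_1,\dots,x_k$. Then $$\hat S_{a,b}(W,W')=\det\Big[\frac{1}{-w_i+w'_{i'}}\cdot\frac{w_i(w_i+1)^a}{w'_{i'}(w'_{i'}+1)^{a-1}}+\frac{1}{w_i-w'_{i'}}\cdot\frac{w_i^k(w_i+1)^{b+1}}{(w'_{i'})^k(w'_{i'}+1)^b}\Big]_{i,i'=1}^k.$$ *)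

From mathcomp Require Import all_boot all_order all_algebra.
Set Implicit Arguments. Unset Strict Implicit. Unset Printing Implicit Defensive.
Import Order.TTheory GRing.Theory Num.Theory.
Local Open Scope ring_scope.

(* Weakly increasing integer tuples a <= x_1 <= ... <= x_k <= b are encoded as
   x_j = a + o_j with o : {ffun 'I_k -> 'I_(n+1)}, n = `|b - a|, o nondecreasing. *)
Definition incr_tuples (k n : nat) : {set {ffun 'I_k -> 'I_n.+1}} :=
  [set o : {ffun 'I_k -> 'I_n.+1} | [forall i : 'I_k, forall j : 'I_k, (i <= j)%N ==> (o i <= o j)%N]].

Definition Shat (C : numClosedFieldType) (k : nat) (a b : int)
    (W W' : 'I_k -> C) : C :=
  \sum_(o in incr_tuples k `|b - a|%N)
    let x := fun j : 'I_k => (a + (o j)%:Z)%R in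
    \det (\matrix_(i < k, j < k) ((W i + 1) ^ (x j) * W i ^+ j.+1)) *
    \det (\matrix_(i < k, j < k) ((W' i + 1) ^ (- x j) * (W' i) ^- j.+1)).

From mathcomp Require Import all_boot all_order all_algebra.
From mathcomp Require Import ring.
Set Implicit Arguments. Unset Strict Implicit. Unset Printing Implicit Defensive.
Import Order.TTheory GRing.Theory Num.Theory.
Local Open Scope ring_scope.

(* Write x_j = a + o_j with 0 <= o_j <= n := b - a.  Shifting the column
   exponents j to j + p, we prove by induction on k ([main_identity]) that the
   sum restricted to tuples with o_1 >= m is det Z_p(a + m), where Z_p(c) has
   entries [lower_entry p c + upper_entry (k + p) b].  Fixing the first
   coordinate o_1 = t and expanding both determinants along their first
   column, the induction hypothesis produces cofactors of Z_{p+1}(a + t); the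
   rank-one update formula for determinants together with two partial
   fraction identities for the entries identifies the result with
   det Z_p(a + t) - det Z_p(a + t + 1).  Summing over t telescopes, and the
   last term det Z_p(b + 1) vanishes because, by a geometric summation,
   Z_p(b + 1) is a product of a (k+1) x k and a k x (k+1) matrix.  The theorem
   is the case p = 0, m = 0. *)

Section RankOneUpdate.
Variable R : comNzRingType.

Definition row_repl n (M : 'M[R]_n) (i0 : 'I_n) (d : 'I_n -> R) : 'M[R]_n :=
  \matrix_(i, j) (if i == i0 then d j else M i j).

Lemma det_row_repl n (M : 'M[R]_n) i0 d :
  \det (row_repl M i0 d) = \sum_j d j * cofactor M i0 j.
Proof.
rewrite (expand_det_row _ i0); apply: eq_bigr => j _; rewrite mxE eqxx.
congr (_ * (_ * \det _)); apply/matrixP=> r s; rewrite !mxE.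
by rewrite eq_sym (negbTE (neq_lift _ _)).
Qed.

(* Adding [c i *: d] to the rows [i < s] of [M]: in the multilinear expansion
   only the terms with at most one added row survive, since two rows equal to
   [d] make the determinant vanish. *)
Lemma det_add_outer_prefix n (c d : 'I_n -> R) s (M : 'M[R]_n) : (s <= n)%N ->
  \det (\matrix_(i, j) (M i j + (if (i < s)%N then c i * d j else 0))) =
  \det M + \sum_(i < n | (i < s)%N) c i * \det (row_repl M i d).
Proof.
elim: s M => [|s IH] M sn.
  rewrite big_pred0 // addr0; congr (\det _); apply/matrixP=> i j.
  by rewrite mxE ltn0 addr0.
pose i0 := Ordinal sn.
pose B := \matrix_(i, j) (M i j + (if (i < s)%N then c i * d j else 0)).
have i0_out : (i0 < s)%N = false by rewrite ltnn.
have prefixS (i : 'I_n) : i != i0 -> (i < s.+1)%N = (i < s)%N.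
  by rewrite -(inj_eq val_inj) ltnS leq_eqVlt => /negbTE ->.
(* Row [i0] is the row of [B] plus [c i0] times [d]. *)
rewrite (@determinant_multilinear _ _ _ B (row_repl B i0 d) i0 1 (c i0)); first last.
- apply/matrixP=> i j; rewrite !mxE eq_sym (negbTE (neq_lift _ _)).
  by rewrite prefixS // eq_sym neq_lift.
- by apply/matrixP=> i j; rewrite !mxE prefixS // eq_sym neq_lift.
- by apply/matrixP=> i j; rewrite !mxE eqxx ltnSn i0_out /=; ring.
(* Once row [i0] is [d], the updates of the other rows are multiples of it. *)
have -> : row_repl B i0 d =
    \matrix_(i, j) (row_repl M i0 d i j + (if (i < s)%N then c i * d j else 0)).
  by apply/matrixP=> i j; rewrite !mxE; case: eqP => // ->; rewrite i0_out addr0.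
rewrite mul1r !(IH _ (ltnW sn)) [X in c i0 * (_ + X)]big1 ?addr0; last first.
  move=> i lt_is; rewrite (@determinant_alternate _ _ _ i i0) ?mulr0 //.
    by rewrite -(inj_eq val_inj) /=; apply: contraTneq lt_is => ->; rewrite ltnn.
  by move=> j; rewrite !mxE !eqxx; case: eqP => // ei; move: lt_is; rewrite ei ltnn.
rewrite [in RHS](bigD1 i0) ?ltnSn //= -addrA [c i0 * _ + _]addrC.
congr (_ + (_ + _)); apply: eq_bigl => i /=.
by have [->|ne] := eqVneq i i0; [rewrite i0_out andbF | rewrite andbT prefixS].
Qed.

Lemma det_add_outer n (c d : 'I_n -> R) (M : 'M[R]_n) :
  \det (\matrix_(i, j) (M i j + c i * d j)) =
  \det M + \sum_i c i * \det (row_repl M i d).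
Proof.
rewrite (eq_bigl (fun i : 'I_n => (i < n)%N)) => [|i]; last by rewrite ltn_ord.
rewrite -det_add_outer_prefix //; congr (\det _).
by apply/matrixP=> i j; rewrite !mxE ltn_ord.
Qed.

End RankOneUpdate.

(* A product (k+1) x k times k x (k+1) has rank at most k, hence is singular. *)
Lemma det_mul_thin (F : fieldType) k (A : 'M[F]_(k.+1, k)) (B : 'M[F]_(k, k.+1)) :
  \det (A *m B) = 0.
Proof.
apply/eqP; apply: contraT => nz.
have /mxrank_unit rankAB : A *m B \in unitmx by rewrite unitmxE unitfE.
by have := leq_trans (mxrankM_maxl A B) (rank_leq_col A); rewrite rankAB ltnn.
Qed.

Definition fcons (X : Type) k (t : X) (o : {ffun 'I_k -> X}) : {ffun 'I_k.+1 -> X} :=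
  [ffun j => if unlift ord0 j is Some j' then o j' else t].

Lemma fcons0 (X : Type) k (t : X) (o : {ffun 'I_k -> X}) : fcons t o ord0 = t.
Proof. by rewrite ffunE unlift_none. Qed.

Lemma fconsS (X : Type) k (t : X) (o : {ffun 'I_k -> X}) j :
  fcons t o (lift ord0 j) = o j.
Proof. by rewrite ffunE liftK. Qed.

Lemma sum_ffunS (V : nmodType) (X : finType) k (F : {ffun 'I_k.+1 -> X} -> V) :
  \sum_o F o = \sum_(t : X) \sum_(o : {ffun 'I_k -> X}) F (fcons t o).
Proof.
rewrite pair_big /= (reindex (fun p : X * {ffun 'I_k -> X} => fcons p.1 p.2)) //.
exists (fun o : {ffun 'I_k.+1 -> X} => (o ord0, [ffun j => o (lift ord0 j)])) => [[t o] _ | o _] /=.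
  by rewrite fcons0; congr (_, _); apply/ffunP=> j; rewrite ffunE fconsS.
by apply/ffunP=> j; rewrite ffunE; case: unliftP => [j'|] ->; rewrite ?ffunE.
Qed.

Definition incr_from k n (m : nat) (o : {ffun 'I_k -> 'I_n.+1}) : bool :=
  (o \in incr_tuples k n) && [forall i, (m <= o i)%N].

Lemma incr_from_cons k n m (t : 'I_n.+1) (o : {ffun 'I_k -> 'I_n.+1}) :
  incr_from m (fcons t o) = (m <= t)%N && incr_from t o.
Proof.
rewrite /incr_from !inE; apply/andP/and3P => [[/forallP mono /forallP lb] | [mt]].
  have mono' (i j : 'I_k.+1) := implyP (forallP (mono i) j).
  split; first by have := lb ord0; rewrite fcons0.
    apply/forallP=> i; apply/forallP=> j; apply/implyP=> ij.
    by have := mono' (lift ord0 i) (lift ord0 j); rewrite !fconsS; apply.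
  by apply/forallP=> i; have := mono' ord0 (lift ord0 i); rewrite fcons0 fconsS; apply.
move=> /forallP mono /forallP lb; split.
  apply/forallP=> i; apply/forallP=> j; apply/implyP.
  case: (unliftP ord0 i) => [i'|] ->; case: (unliftP ord0 j) => [j'|] ->;
    rewrite ?fcons0 ?fconsS //.
  by rewrite /= /bump /= !add1n ltnS; apply/implyP/(forallP (mono i')).
apply/forallP=> i; case: (unliftP ord0 i) => [i'|] ->; rewrite ?fcons0 ?fconsS //.
exact: leq_trans mt (lb i').
Qed.

Lemma sum_incr_from_cons (V : nmodType) k n m (F : {ffun 'I_k.+1 -> 'I_n.+1} -> V) :
  \sum_(o | incr_from m o) F o =
  \sum_(t < n.+1 | (m <= t)%N) \sum_(o | incr_from t o) F (fcons t o).
Proof.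
rewrite big_mkcond sum_ffunS [RHS]big_mkcond; apply: eq_bigr => t _.
under eq_bigr do rewrite incr_from_cons.
by case: (m <= t)%N => /=; [rewrite -big_mkcond | rewrite big1].
Qed.

Section Entries.
Variable F : fieldType.
Implicit Types (c d : int) (p q : nat).

Definition left_weight p c (w : F) := (w + 1) ^ c * w ^+ p.+1.
Definition right_weight p c (w' : F) := (w' + 1) ^ (- c) * w' ^- p.+1.

Definition lower_entry p c (w w' : F) :=
  (- w + w')^-1 * (w ^+ p.+1 * (w + 1) ^ c / (w' ^+ p.+1 * (w' + 1) ^ (c - 1))).
Definition upper_entry q d (w w' : F) :=
  (w - w')^-1 * (w ^+ q * (w + 1) ^ (d + 1) / (w' ^+ q * (w' + 1) ^ d)).

Variables (w w' : F).
Hypotheses (w1_neq0 : w + 1 != 0) (w'_neq0 : w' != 0) (w'1_neq0 : w' + 1 != 0).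
Hypothesis w_neq_w' : w != w'.

Let wN_neq0 : - w + w' != 0. Proof. by rewrite addrC subr_eq0 eq_sym. Qed.
Let w_sub_neq0 : w - w' != 0. Proof. by rewrite subr_eq0. Qed.
Let expw'_neq0 p : w' ^+ p != 0. Proof. exact: expf_neq0. Qed.
Let expw'1_neq0 c : (w' + 1) ^ c != 0. Proof. exact: expfz_neq0. Qed.

(* Partial fraction identities: raising the column shift of [lower_entry]
   costs a rank-one term, as does raising its position.  Their difference is
   what the first-column expansion of the summand produces. *)
Lemma lower_entry_shift_exp p c :
  lower_entry p.+1 c w w' + left_weight p c w * (right_weight p c w' + right_weight p.+1 c w')
  = lower_entry p c w w'.
Proof.
rewrite /lower_entry /left_weight /right_weight expfzDr // -!invr_expz expr1z !exprSr.
by field; rewrite wN_neq0 expw'1_neq0 w'1_neq0 w'_neq0 expw'_neq0.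
Qed.

Lemma lower_entry_shift_pos p c :
  lower_entry p.+1 c w w' + left_weight p c w * right_weight p.+1 c w'
  = lower_entry p (c + 1) w w'.
Proof.
rewrite /lower_entry /left_weight /right_weight addrK !expfzDr // -!invr_expz !expr1z !exprSr.
by field; rewrite wN_neq0 expw'1_neq0 w'1_neq0 w'_neq0 expw'_neq0.
Qed.

Lemma lower_upper_cancel p d : lower_entry p (d + 1) w w' = - upper_entry p.+1 d w w'.
Proof.
rewrite /lower_entry /upper_entry addrK.
have -> : - w + w' = - (w - w') by rewrite opprB addrC.
by rewrite invrN mulNr.
Qed.

Lemma upper_entry_step q d :
  upper_entry q.+2 d w w' - upper_entry q.+1 d w w' =
  left_weight q (d + 1) w * right_weight q.+1 d w'.
Proof.
rewrite /upper_entry /left_weight /right_weight -!invr_expz !exprSr.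
by field; rewrite w_sub_neq0 expw'1_neq0 w'_neq0 expw'_neq0.
Qed.

(* Geometric summation: the entry at position d+1 and shift p+1+k is a sum of k
   separable terms, so the corresponding matrix factors through dimension k. *)
Lemma lower_upper_sum p k d :
  lower_entry p (d + 1) w w' + upper_entry (p.+1 + k) d w w' =
  \sum_(s < k) left_weight (p + s) (d + 1) w * right_weight (p + s).+1 d w'.
Proof.
rewrite -(big_mkord xpredT (fun s => left_weight (p + s) (d + 1) w * right_weight (p + s).+1 d w')).
rewrite (telescope_sumr_eq (fun s => upper_entry (p.+1 + s) d w w')) // => [|s _].
  by rewrite lower_upper_cancel addn0 addrC.
by rewrite -upper_entry_step !addSn addnS.
Qed.

End Entries.

Section Main.
Variable C : fieldType.
Variables (a b : int) (n : nat).
(* The offsets range over [0, n], i.e. x_j ranges over [a, b]. *)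
Hypothesis b_def : b = a + n%:Z.

Definition left_mx k p (W : 'I_k -> C) (o : {ffun 'I_k -> 'I_n.+1}) : 'M[C]_k :=
  \matrix_(i, j) left_weight (j + p) (a + (o j)%:Z) (W i).
Definition right_mx k p (W' : 'I_k -> C) (o : {ffun 'I_k -> 'I_n.+1}) : 'M[C]_k :=
  \matrix_(i, j) right_weight (j + p) (a + (o j)%:Z) (W' i).
Definition summand k p (W W' : 'I_k -> C) (o : {ffun 'I_k -> 'I_n.+1}) : C :=
  \det (left_mx p W o) * \det (right_mx p W' o).

Definition Z_mx k p q c (W W' : 'I_k -> C) : 'M[C]_k :=
  \matrix_(i, i') (lower_entry p c (W i) (W' i') + upper_entry q b (W i) (W' i')).

Definition nondegenerate k (W W' : 'I_k -> C) :=
  [/\ forall i, W i + 1 != 0, forall i, W' i != 0, forall i, W' i + 1 != 0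
    & forall i i', W i != W' i'].

Lemma nondegenerate_lift k (W W' : 'I_k.+1 -> C) i i' : nondegenerate W W' ->
  nondegenerate (fun r => W (lift i r)) (fun r => W' (lift i' r)).
Proof. by case=> W1 W'0 W'1 WW'; split=> *. Qed.

Lemma summand_cons k p (W W' : 'I_k.+1 -> C) (t : 'I_n.+1) o :
  summand p W W' (fcons t o) =
  \sum_i \sum_i' (left_weight p (a + t%:Z) (W i) * right_weight p (a + t%:Z) (W' i')
                  * (-1) ^+ (i + i')) *
     summand p.+1 (fun r => W (lift i r)) (fun r => W' (lift i' r)) o.
Proof.
rewrite /summand (expand_det_col _ ord0) (expand_det_col (right_mx _ _ _) ord0) mulr_suml.
apply: eq_bigr => i _; rewrite mulr_sumr; apply: eq_bigr => i' _; rewrite /cofactor.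
have -> : row' i (col' ord0 (left_mx p W (fcons t o))) = left_mx p.+1 (fun r => W (lift i r)) o.
  by apply/matrixP=> r s; rewrite !mxE fconsS lift0 addSnnS.
have -> : row' i' (col' ord0 (right_mx p W' (fcons t o))) = right_mx p.+1 (fun r => W' (lift i' r)) o.
  by apply/matrixP=> r s; rewrite !mxE fconsS lift0 addSnnS.
rewrite !mxE fcons0 !addn0 exprD; ring.
Qed.

Lemma det_Z_mx_step k p q c (W W' : 'I_k -> C) : nondegenerate W W' ->
  \sum_i left_weight p c (W i) *
      \det (row_repl (Z_mx p.+1 q c W W') i (fun i' => right_weight p c (W' i')))
  = \det (Z_mx p q c W W') - \det (Z_mx p q (c + 1) W W').
Proof.
case=> W1 W'0 W'1 WW'.
pose Z := Z_mx p.+1 q c W W'.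
pose al i := left_weight p c (W i).
pose be i' := right_weight p c (W' i').
pose ga i' := right_weight p.+1 c (W' i').
have -> : Z_mx p q c W W' = \matrix_(i, j) (Z i j + al i * (be j + ga j)).
  apply/matrixP=> i j; rewrite !mxE -(lower_entry_shift_exp (W'0 j) (W'1 j) (WW' i j)).
  by rewrite /al /be /ga; ring.
have -> : Z_mx p q (c + 1) W W' = \matrix_(i, j) (Z i j + al i * ga j).
  apply/matrixP=> i j; rewrite !mxE.
  rewrite -(lower_entry_shift_pos (W1 i) (W'0 j) (W'1 j) (WW' i j)).
  by rewrite /al /ga; ring.
rewrite !det_add_outer opprD addrACA subrr add0r -sumrB; apply: eq_bigr => i _.
rewrite -mulrBr !det_row_repl -sumrB; congr (_ * _); apply: eq_bigr => j _.
by rewrite mulrDl addrK.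
Qed.

(* Past the upper bound the kernel matrix is a thin product, so singular. *)
Lemma det_Z_mx_top k p (W W' : 'I_k.+1 -> C) : nondegenerate W W' ->
  \det (Z_mx p (k.+1 + p) (a + n.+1%:Z) W W') = 0.
Proof.
case=> W1 W'0 W'1 WW'.
pose F : 'M[C]_(k.+1, k) := \matrix_(i, s) left_weight (p + s) (b + 1) (W i).
pose G : 'M[C]_(k, k.+1) := \matrix_(s, i') right_weight (p + s).+1 b (W' i').
suff -> : Z_mx p (k.+1 + p) (a + n.+1%:Z) W W' = F *m G by apply: det_mul_thin.
apply/matrixP=> i i'; rewrite !mxE.
have -> : a + n.+1%:Z = b + 1 by rewrite b_def -addn1 PoszD addrA.
rewrite addSn -addnS addnC (lower_upper_sum (W'0 i') (W'1 i') (WW' i i')).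
by apply: eq_bigr => s _; rewrite !mxE.
Qed.

(* The generalized identity, by induction on k: fix the first offset t, apply
   the induction hypothesis to the minors and telescope over t. *)
Lemma main_identity k : forall p m (W W' : 'I_k -> C), nondegenerate W W' -> (m <= n.+1)%N ->
  \sum_(o | incr_from m o) summand p W W' o = \det (Z_mx p (k + p) (a + m%:Z) W W').
Proof.
elim: k => [|k IH] p m W W' WW' mn.
  rewrite det_mx00 /summand (eq_bigr (fun _ => 1)) => [|o _]; last by rewrite !det_mx00 mulr1.
  rewrite sumr_const (eq_card (B := predT)) ?card_ffun ?card_ord //.
  by move=> o; rewrite unfold_in /= inE; apply/andP; split; apply/forallP=> -[].
pose f t := \det (Z_mx p (k.+1 + p) (a + t%:Z) W W').
have first_offset (t : 'I_n.+1) :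
    \sum_(o | incr_from t o) summand p W W' (fcons t o) = f t - f t.+1.
  under eq_bigr do rewrite summand_cons.
  rewrite exchange_big; under eq_bigr do rewrite exchange_big.
  under eq_bigr => i _ do under eq_bigr => i' _ do
    rewrite -mulr_sumr (IH _ _ _ _ (nondegenerate_lift i i' WW') (ltnW (ltn_ord t))).
  rewrite /f; have -> : a + t.+1%:Z = a + t%:Z + 1 by rewrite -addn1 PoszD addrA.
  rewrite -(det_Z_mx_step _ _ _ WW'); apply: eq_bigr => i _.
  rewrite det_row_repl mulr_sumr; apply: eq_bigr => i' _; rewrite /cofactor !mulrA.
  congr (_ * \det _); apply/matrixP=> r s; rewrite !mxE.
  by rewrite addnS addSn.
rewrite sum_incr_from_cons (eq_bigr _ (fun t _ => first_offset t)).
rewrite -(big_geq_mkord _ _ xpredT (fun t => f t - f t.+1)) /=.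
under eq_bigr do rewrite -opprB.
by rewrite sumrN telescope_sumr // opprB /f det_Z_mx_top // subr0.
Qed.

End Main.

Theorem mainTheorem10 (C : numClosedFieldType) (k : nat) (a b : int)
    (W W' : 'I_k -> C) :
  (1 <= k)%N -> a <= b ->
  (forall i, W i != 0 /\ W i != -1) ->
  (forall i, W' i != 0 /\ W' i != -1) ->
  (forall i i', W i != W' i') ->
  Shat a b W W' =
  \det (\matrix_(i < k, i' < k)
     ((- W i + W' i')^-1 *
        (W i * (W i + 1) ^ a / (W' i' * (W' i' + 1) ^ (a - 1))) +
      (W i - W' i')^-1 *
        (W i ^+ k * (W i + 1) ^ (b + 1) / (W' i' ^+ k * (W' i' + 1) ^ b)))).
Proof.
move=> _ le_ab W_ok W'_ok WW'.
pose n := `|b - a|%N.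
have b_def : b = a + n%:Z by rewrite /n abszE ger0_norm ?subr_ge0 // addrCA subrr addr0.
have nondeg : nondegenerate W W'.
  split=> [i|i|i|//]; rewrite ?addr_eq0; [exact: (W_ok i).2 | exact: (W'_ok i).1 | exact: (W'_ok i).2].
have -> : Shat a b W W' = \sum_(o : {ffun 'I_k -> 'I_n.+1} | incr_from 0 o) summand a 0 W W' o.
  apply: eq_big => [o | o _] /=; first by rewrite /incr_from andb_idr // => _; apply/forallP.
  by rewrite /summand; congr (_ * _); congr (\det _); apply/matrixP=> i j; rewrite !mxE addn0.
by rewrite (main_identity b_def) // addr0 addn0.
Qed.
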